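(* Let $\langle V, Q\rangle$ be a Federated Byzantine Agreement System with quorum slice cardinality map $C$. If $C(v) > |V|/2$ for every $v \in V$, then $\langle V, Q\rangle$ enjoys quorum intersection, i.e. any two quorums $U_1, U_2$ satisfy $U_1\cap U_2\neq\varnothing$.
   Context: An FBAS is a pair $\langle V, Q\rangle$ where $V$ is a finite set of nodes and $Q : V \to 2^{2^V}\setminus\{\varnothing\}$ assigns to each node a nonempty collection of subsets of $V$ (its quorum slices), such that for all $v\in V$ and all $q\in Q(v)$, $v \in q$. A set $U \subseteq V$ is a quorum iff $U\neq\varnothing$ and for every $u\in U$ there exists $q \in Q(u)$ with $q\subseteq U$. The FBAS enjoys quorum intersection iff every two quorums share a node. The quorum slice cardinality map is $C(v)=\min\{|q| : q\in Q(v)\}$. *)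

From mathcomp Require Import all_boot.
Set Implicit Arguments. Unset Strict Implicit. Unset Printing Implicit Defensive.

Definition is_FBAS (V : finType) (Q : V -> {set {set V}}) : Prop :=
  forall v : V, Q v != set0 /\ (forall q, q \in Q v -> v \in q).

Definition is_quorum (V : finType) (Q : V -> {set {set V}}) (U : {set V}) : Prop :=
  U != set0 /\ forall u, u \in U -> exists2 q, q \in Q u & q \subset U.

Definition quorum_intersection (V : finType) (Q : V -> {set {set V}}) : Prop :=
  forall U1 U2 : {set V}, is_quorum Q U1 -> is_quorum Q U2 -> U1 :&: U2 != set0.

(* Quorum slice cardinality map C(v) = min { |q| : q in Q(v) }.
   The seed #|V| is an upper bound of every |q|, so for nonempty Q v
   this is exactly the minimum. *)
Definition slice_card (V : finType) (Q : V -> {set {set V}}) (v : V) : nat :=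
  \big[minn/#|V|]_(q in Q v) #|q|.

(* Every quorum contains a whole slice of any of its members, and every slice
   holds more than half of the nodes; two sets that each hold more than half
   of V must meet. *)
From HB Require Import structures.
From mathcomp Require Import all_boot.
From mathcomp Require Import zify.

Set Implicit Arguments.
Unset Strict Implicit.
Unset Printing Implicit Defensive.

HB.instance Definition _ := SemiGroup.isComLaw.Build nat minn minnA minnC.

Lemma slice_card_le (V : finType) (Q : V -> {set {set V}}) v q :
  q \in Q v -> slice_card Q v <= #|q|.
Proof. by move=> qQv; rewrite /slice_card (bigD1 q) //= geq_minl. Qed.

Lemma large_setI_neq0 (T : finType) (A B : {set T}) :
  #|T| < #|A| + #|B| -> A :&: B != set0.
Proof.
move=> card_lt; rewrite -card_gt0 -(ltn_add2l #|A :|: B|) cardsUI addn0.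
exact: leq_ltn_trans (max_card _) card_lt.
Qed.

Lemma setI_neq0S (T : finType) (A1 A2 B1 B2 : {set T}) :
  A1 \subset B1 -> A2 \subset B2 -> A1 :&: A2 != set0 -> B1 :&: B2 != set0.
Proof.
move=> sAB1 sAB2; apply: contraNneq => B12_0.
by rewrite -subset0 -B12_0 setISS.
Qed.

Theorem mainTheorem2 (V : finType) (Q : V -> {set {set V}}) :
  is_FBAS Q ->
  (forall v : V, #|V| < 2 * slice_card Q v) ->
  quorum_intersection Q.
Proof.
move=> _ slice_card_gt U1 U2 [/set0Pn[u1 u1U1] quorumU1] [/set0Pn[u2 u2U2] quorumU2].
have [q1 q1Q q1U1] := quorumU1 u1 u1U1.
have [q2 q2Q q2U2] := quorumU2 u2 u2U2.
apply: (setI_neq0S q1U1 q2U2); apply: large_setI_neq0.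
have := slice_card_le q1Q; have := slice_card_le q2Q.
have := slice_card_gt u1; have := slice_card_gt u2.
lia.
Qed.
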